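(* Let the timeline be $(\mathbb{Z},\leq)$, let $\Pi$ be a propositional DatalogMTL program, $\mathcal{D}$ a dataset in normal form, $Q$ a proposition and $t_B\le t_E$ integers. Let $B,E,Q'$ be fresh propositions and $\Pi^Q=\Pi\cup\{Q'\leftarrow Q\,\mathcal{U}_{[0,\infty)}\,E,\ \bot\leftarrow B\wedge Q'\}$. Then $Q@[t_B,t_E]$ is not entailed from $(\mathcal{D},\Pi)$ under the $s$-intersection semantics if and only if there exists a subset $\mathcal{D}'\subseteq\mathcal{D}$ such that (i) $\mathcal{D}'\cup\{B@\{t_B-1\},E@\{t_E+1\}\}$ is $\Pi^Q$-consistent, and (ii) for every fact $\varphi\in\mathcal{D}\setminus\mathcal{D}'$ there exists an $s$-repair $\mathcal{R}$ of $\mathcal{D}$ w.r.t. $\Pi$ with $\varphi\notin\mathcal{R}$.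
   Context: A propositional DatalogMTL program uses only nullary predicates. $\mathfrak{M},t\models A\,\mathcal{U}_\varrho A'$ iff there is $t'$ with $t'-t\in\varrho$, $\mathfrak{M},t'\models A'$, and $A$ holds at all $s\in(t,t')$. A dataset is a finite set of facts $P@\iota$ ($\iota$ a non-empty interval); $\Pi$-consistency and entailment are as usual. A set of facts is in normal form if it contains no two distinct facts $P@\iota_1,P@\iota_2$ with $\iota_1\cup\iota_2$ (as a set of integers) equal to the set of integers of an interval. An $s$-repair of $\mathcal{D}$ w.r.t. $\Pi$ is a $\subseteq$-maximal $\Pi$-consistent subset of $\mathcal{D}$. $Q@[t_B,t_E]$ is entailed under $s$-intersection semantics if $(\mathcal{I},\Pi)\models Q@[t_B,t_E]$ where $\mathcal{I}=\{P@\{t\}\mid \mathcal{R}\models P@\{t\}\text{ for every } s\text{-repair }\mathcal{R}\}$. *)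

From Stdlib Require Import ZArith List.
Import ListNotations.
Open Scope Z_scope.

Definition prop := nat.

(** Ranges of metric operators: non-negative intervals [lo, hi] (hi = None
    means +infinity).  Over the integers, open endpoints are expressible as
    closed ones. *)
Record range := mkRange { rlo : nat ; rhi : option nat }.

Definition in_range (r : range) (d : Z) : Prop :=
  Z.of_nat (rlo r) <= d /\
  match rhi r with Some h => d <= Z.of_nat h | None => True end.

Record interval := mkInterval { ilo : option Z ; ihi : option Z }.

Definition in_interval (i : interval) (t : Z) : Prop :=
  match ilo i with Some a => a <= t | None => True end /\
  match ihi i with Some b => t <= b | None => True end.

Definition nonempty_interval (i : interval) : Prop := exists t, in_interval i t.

Definition punct (t : Z) : interval := mkInterval (Some t) (Some t).
Definition closed_int (a b : Z) : interval := mkInterval (Some a) (Some b).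

Inductive matom :=
| MTop
| MBot
| MProp (p : prop)
| MBoxP (r : range) (m : matom)
| MBoxF (r : range) (m : matom)
| MDiaP (r : range) (m : matom)
| MDiaF (r : range) (m : matom)
| MSince (r : range) (m1 m2 : matom)
| MUntil (r : range) (m1 m2 : matom).

Inductive hatom :=
| HProp (p : prop)
| HBoxP (r : range) (h : hatom)
| HBoxF (r : range) (h : hatom).

Inductive head := HBot | HAtom (h : hatom).

Record rule := mkRule { rhead : head ; rbody : list matom }.
Definition program := list rule.

Record fact := mkFact { fpred : prop ; fint : interval }.
Definition factset := fact -> Prop.
Definition dataset := list fact.
Definition fs_of (D : list fact) : factset := fun f => In f D.

Definition interp := prop -> Z -> Prop.

Fixpoint sat_m (M : interp) (m : matom) (t : Z) : Prop :=
  match m with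
  | MTop => True
  | MBot => False
  | MProp p => M p t
  | MBoxP r m => forall s, in_range r (t - s) -> sat_m M m s
  | MBoxF r m => forall s, in_range r (s - t) -> sat_m M m s
  | MDiaP r m => exists s, in_range r (t - s) /\ sat_m M m s
  | MDiaF r m => exists s, in_range r (s - t) /\ sat_m M m s
  | MSince r m1 m2 => exists s, in_range r (t - s) /\ sat_m M m2 s /\
                        forall u, s < u < t -> sat_m M m1 u
  | MUntil r m1 m2 => exists s, in_range r (s - t) /\ sat_m M m2 s /\
                        forall u, t < u < s -> sat_m M m1 u
  end.

Fixpoint sat_h (M : interp) (h : hatom) (t : Z) : Prop :=
  match h with
  | HProp p => M p t
  | HBoxP r h => forall s, in_range r (t - s) -> sat_h M h s
  | HBoxF r h => forall s, in_range r (s - t) -> sat_h M h s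
  end.

Definition sat_head (M : interp) (h : head) (t : Z) : Prop :=
  match h with HBot => False | HAtom a => sat_h M a t end.

Definition sat_rule (M : interp) (r : rule) : Prop :=
  forall t, (forall b, In b (rbody r) -> sat_m M b t) -> sat_head M (rhead r) t.

Definition model_prog (M : interp) (P : program) : Prop :=
  forall r, In r P -> sat_rule M r.

Definition sat_fact (M : interp) (f : fact) : Prop :=
  forall t, in_interval (fint f) t -> M (fpred f) t.

Definition model_facts (M : interp) (F : factset) : Prop :=
  forall f, F f -> sat_fact M f.

Definition consistent (P : program) (F : factset) : Prop :=
  exists M, model_prog M P /\ model_facts M F.

Definition entails (P : program) (F : factset) (f : fact) : Prop :=
  forall M, model_prog M P -> model_facts M F -> sat_fact M f.

Definition is_dataset (D : dataset) : Prop :=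
  forall f, In f D -> nonempty_interval (fint f).

Definition subset_ds (D1 D2 : list fact) : Prop := forall f, In f D1 -> In f D2.

Definition normal_form (D : dataset) : Prop :=
  forall f1 f2, In f1 D -> In f2 D -> f1 <> f2 -> fpred f1 = fpred f2 ->
    ~ exists i : interval, forall t,
        (in_interval (fint f1) t \/ in_interval (fint f2) t) <-> in_interval i t.

Definition s_repair (P : program) (D R : dataset) : Prop :=
  subset_ds R D /\ consistent P (fs_of R) /\
  forall R', subset_ds R R' -> subset_ds R' D -> consistent P (fs_of R') ->
             subset_ds R' R.

Definition s_int_set (P : program) (D : dataset) : factset :=
  fun f => exists p t, f = mkFact p (punct t) /\
    forall R, s_repair P D R -> entails [] (fs_of R) (mkFact p (punct t)).

Definition s_int_entails (P : program) (D : dataset) (q : fact) : Prop :=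
  entails P (s_int_set P D) q.

Fixpoint occ_m (p : prop) (m : matom) : Prop :=
  match m with
  | MTop | MBot => False
  | MProp q => q = p
  | MBoxP _ m | MBoxF _ m | MDiaP _ m | MDiaF _ m => occ_m p m
  | MSince _ m1 m2 | MUntil _ m1 m2 => occ_m p m1 \/ occ_m p m2
  end.

Fixpoint occ_h (p : prop) (h : hatom) : Prop :=
  match h with
  | HProp q => q = p
  | HBoxP _ h | HBoxF _ h => occ_h p h
  end.

Definition occ_rule (p : prop) (r : rule) : Prop :=
  (match rhead r with HBot => False | HAtom h => occ_h p h end) \/
  exists b, In b (rbody r) /\ occ_m p b.

Definition occ_prog (p : prop) (P : program) : Prop := exists r, In r P /\ occ_rule p r.
Definition occ_ds (p : prop) (D : dataset) : Prop := exists f, In f D /\ fpred f = p.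

Definition PiQ (P : program) (Q B E Q' : prop) : program :=
  P ++ [ mkRule (HAtom (HProp Q')) [MUntil (mkRange 0 None) (MProp Q) (MProp E)] ;
         mkRule HBot [MProp B; MProp Q'] ].

(** If Q@[tB,tE] is not entailed, take a countermodel M of (I, Pi) with Q false at
    some t0 in [tB,tE], and let D' be the facts lying in every s-repair. Every point
    of D' belongs to I, so M satisfies D'; interpreting B and E exactly at tB-1 and
    tE+1 and Q' at t <= tE+1 iff Q holds on (t, tE] turns M into a model of Pi^Q,
    where the constraint on B and Q' holds because Q fails at t0.
    Conversely, a model of D' ∪ {B@{tB-1}, E@{tE+1}} and Pi^Q satisfies I: a point
    P@{t} of I is covered by a fact of every repair, and by normal form all these
    facts coincide, so the fact is in every repair, hence in D'. If Q held on
    [tB,tE], the rule for Q' would fire at tB-1 and violate the constraint. *)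

From Pilot Require Import Defs.
From Stdlib Require Import ZArith List Lia Classical Setoid.
Import ListNotations.
Open Scope Z_scope.

Lemma sat_m_ext (M M' : interp) (m : matom) :
  (forall q, occ_m q m -> forall t, M q t <-> M' q t) ->
  forall t, sat_m M m t <-> sat_m M' m t.
Proof.
  induction m as [| |p|r m IH|r m IH|r m IH|r m IH|r m1 IH1 m2 IH2|r m1 IH1 m2 IH2];
    simpl; intros Hagree t; try tauto.
  1: apply Hagree; reflexivity.
  1-4: setoid_rewrite (IH Hagree); reflexivity.
  1-2: setoid_rewrite (IH1 (fun q Hq => Hagree q (or_introl Hq)));
       setoid_rewrite (IH2 (fun q Hq => Hagree q (or_intror Hq))); reflexivity.
Qed.

Lemma sat_h_ext (M M' : interp) (h : hatom) :
  (forall q, occ_h q h -> forall t, M q t <-> M' q t) ->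
  forall t, sat_h M h t <-> sat_h M' h t.
Proof.
  induction h as [p|r h IH|r h IH]; simpl; intros Hagree t.
  - apply Hagree; reflexivity.
  - setoid_rewrite (IH Hagree); reflexivity.
  - setoid_rewrite (IH Hagree); reflexivity.
Qed.

Lemma model_prog_ext (M M' : interp) (P : program) :
  (forall q, occ_prog q P -> forall t, M q t <-> M' q t) ->
  model_prog M P -> model_prog M' P.
Proof.
  intros Hagree HM r Hr t Hbody.
  assert (Hbody' : forall b, In b (rbody r) -> sat_m M b t).
  { intros b Hb. apply (sat_m_ext M M' b); [|now apply Hbody].
    intros q Hq. apply Hagree. exists r. split; [exact Hr|]. right. now exists b. }
  specialize (HM r Hr t Hbody').
  unfold sat_head in *. destruct (rhead r) as [|h] eqn:Ehead; [exact HM|].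
  apply (sat_h_ext M M' h); [|exact HM].
  intros q Hq. apply Hagree. exists r. split; [exact Hr|]. left. now rewrite Ehead.
Qed.

Lemma model_prog_app (M : interp) (P1 P2 : program) :
  model_prog M (P1 ++ P2) <-> model_prog M P1 /\ model_prog M P2.
Proof.
  unfold model_prog. setoid_rewrite in_app_iff. firstorder.
Qed.

Lemma occ_ds_subset (p : prop) (D1 D2 : dataset) :
  subset_ds D1 D2 -> occ_ds p D1 -> occ_ds p D2.
Proof. intros Hsub [f [Hf Hp]]. exists f. split; [apply Hsub|]; assumption. Qed.

Lemma consistent_incl (P : program) (A A' : list Defs.fact) :
  incl A A' -> consistent P (fs_of A') -> consistent P (fs_of A).
Proof.
  intros Hincl [M [HP HF]]. exists M. split; [exact HP|].
  intros f Hf. apply HF, Hincl, Hf.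
Qed.

Lemma not_entails_countermodel (P : program) (F : factset) (f : Defs.fact) :
  ~ entails P F f ->
  exists M, model_prog M P /\ model_facts M F /\
    exists t, in_interval (fint f) t /\ ~ M (fpred f) t.
Proof.
  intros Hne. apply not_all_ex_not in Hne as [M Hne]. exists M.
  apply imply_to_and in Hne as [HP Hne]. apply imply_to_and in Hne as [HF Hf].
  apply not_all_ex_not in Hf as [t Ht]. apply imply_to_and in Ht.
  repeat split; [exact HP | exact HF | now exists t].
Qed.

Lemma filter_prop_exists (A : Type) (Pr : A -> Prop) (l : list A) :
  exists l', forall x, In x l' <-> In x l /\ Pr x.
Proof.
  induction l as [|y l [l' IH]].
  - exists []. simpl. tauto.
  - destruct (classic (Pr y)) as [Hy|Hy]; [exists (y :: l')|exists l'];
      intros x; simpl; rewrite IH; intuition (subst; tauto).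
Qed.

Lemma greedy_consistent_extension (P : program) (l : list Defs.fact) : forall acc,
  consistent P (fs_of acc) ->
  exists R, incl acc R /\ incl R (acc ++ l) /\ consistent P (fs_of R) /\
    forall x, In x l -> ~ In x R -> ~ consistent P (fs_of (x :: R)).
Proof.
  induction l as [|x l IH]; intros acc Hacc.
  - exists acc. rewrite app_nil_r.
    repeat split; [apply incl_refl|apply incl_refl|exact Hacc|intros x []].
  - destruct (classic (consistent P (fs_of (x :: acc)))) as [Hx|Hx].
    + destruct (IH (x :: acc) Hx) as (R & Hacc_R & HR & HRc & Hmax).
      exists R. repeat split; [| |exact HRc|].
      * intros y Hy. apply Hacc_R. now right.
      * intros y Hy. specialize (HR y Hy). simpl in HR.
        rewrite in_app_iff in *. simpl. tauto.
      * intros y [<-|Hy] Hn; [exfalso; apply Hn, Hacc_R; now left|auto].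
    + destruct (IH acc Hacc) as (R & Hacc_R & HR & HRc & Hmax).
      exists R. repeat split; [exact Hacc_R| |exact HRc|].
      * intros y Hy. specialize (HR y Hy). rewrite in_app_iff in *. simpl. tauto.
      * intros y [<-|Hy] Hn; [|auto].
        intros Hc. apply Hx. eapply consistent_incl; [|exact Hc].
        intros z [<-|Hz]; [now left|right; auto].
Qed.

Lemma s_repair_exists (P : program) (D : dataset) :
  consistent P (fs_of []) -> exists R, s_repair P D R.
Proof.
  intros Hc. destruct (greedy_consistent_extension P D [] Hc) as (R & _ & HRD & HRc & Hmax).
  exists R. repeat split; [exact HRD|exact HRc|].
  intros R' HRR' HR'D HR'c x Hx.
  apply NNPP. intros Hn. apply (Hmax x (HR'D x Hx) Hn).
  eapply consistent_incl; [|exact HR'c]. intros z [<-|Hz]; auto.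
Qed.

Lemma entails_nil_punct (R : list Defs.fact) (p : prop) (t : Z) :
  entails [] (fs_of R) (mkFact p (punct t)) ->
  exists g, In g R /\ fpred g = p /\ in_interval (fint g) t.
Proof.
  intros Hent.
  set (covered := fun q s => exists g, In g R /\ fpred g = q /\ in_interval (fint g) s).
  apply (Hent covered).
  - intros r [].
  - intros f Hf s Hs. now exists f.
  - unfold in_interval; simpl; lia.
Qed.

Lemma overlapping_union_interval (i1 i2 : interval) (t : Z) :
  in_interval i1 t -> in_interval i2 t ->
  exists i, forall s, (in_interval i1 s \/ in_interval i2 s) <-> in_interval i s.
Proof.
  destruct i1 as [a1 b1], i2 as [a2 b2].
  exists (mkInterval
    (match a1, a2 with Some x, Some y => Some (Z.min x y) | _, _ => None end)
    (match b1, b2 with Some x, Some y => Some (Z.max x y) | _, _ => None end)).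
  unfold in_interval in *; simpl in *.
  destruct a1, b1, a2, b2; intros; intuition lia.
Qed.

Lemma normal_form_overlap_eq (D : dataset) (f1 f2 : Defs.fact) (t : Z) :
  normal_form D -> In f1 D -> In f2 D -> fpred f1 = fpred f2 ->
  in_interval (fint f1) t -> in_interval (fint f2) t -> f1 = f2.
Proof.
  intros Hnf H1 H2 Hp Ht1 Ht2. apply NNPP. intros Hneq.
  exact (Hnf f1 f2 H1 H2 Hneq Hp (overlapping_union_interval _ _ t Ht1 Ht2)).
Qed.

Lemma sat_fact_in_all_repairs (P : program) (D : dataset) (M : interp) (f : Defs.fact) :
  model_facts M (s_int_set P D) -> (forall R, s_repair P D R -> In f R) ->
  sat_fact M f.
Proof.
  intros HMI Hall t Ht.
  assert (Hpt : s_int_set P D (mkFact (fpred f) (punct t))).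
  { exists (fpred f), t. split; [reflexivity|].
    intros R HR M0 _ HM0 s Hs. unfold in_interval in Hs; simpl in Hs.
    replace s with t by lia. exact (HM0 f (Hall R HR) t Ht). }
  apply (HMI _ Hpt t). unfold in_interval; simpl; lia.
Qed.

Lemma model_s_int_set (P : program) (D D' : dataset) (M : interp) :
  normal_form D -> (exists R, s_repair P D R) ->
  (forall phi, In phi D -> ~ In phi D' -> exists R, s_repair P D R /\ ~ In phi R) ->
  model_facts M (fs_of D') -> model_facts M (s_int_set P D).
Proof.
  intros Hnf [R0 HR0] Hmiss HMD' f [p [t [-> Hall]]] s Hs.
  unfold in_interval in Hs; simpl in Hs. replace s with t by lia. simpl.
  destruct (entails_nil_punct R0 p t (Hall R0 HR0)) as (g & Hg & <- & Hgt).
  assert (HgD : In g D) by exact (proj1 HR0 g Hg).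
  destruct (classic (In g D')) as [HgD'|HgD']; [exact (HMD' g HgD' t Hgt)|].
  destruct (Hmiss g HgD HgD') as [R1 [HR1 Hg_R1]].
  destruct (entails_nil_punct R1 (fpred g) t (Hall R1 HR1)) as (g1 & Hg1 & Hp1 & Hg1t).
  exfalso. apply Hg_R1.
  rewrite (normal_form_overlap_eq D g g1 t); auto. exact (proj1 HR1 g1 Hg1).
Qed.

Lemma PiQ_refutes_Q (P : program) (M : interp) (Q B E Q' : prop) (tB tE : Z) :
  tB <= tE -> model_prog M (PiQ P Q B E Q') -> M B (tB - 1) -> M E (tE + 1) ->
  ~ (forall t, tB <= t <= tE -> M Q t).
Proof.
  intros Hle HM HB HE HQ.
  apply model_prog_app in HM as [_ Hrules].
  assert (HQ' : M Q' (tB - 1)).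
  { apply (Hrules _ (or_introl eq_refl) (tB - 1)). intros b [<-|[]].
    exists (tE + 1). unfold in_range; simpl. repeat split; [lia|exact HE|].
    intros u Hu. apply HQ. lia. }
  apply (Hrules _ (or_intror (or_introl eq_refl)) (tB - 1)).
  intros b [<-|[<-|[]]]; assumption.
Qed.

Section FreshExtension.

Variables (M : interp) (Q B E Q' : prop) (tB tE : Z).
Hypotheses (HBE : B <> E) (HBQ' : B <> Q') (HEQ' : E <> Q')
  (HBQ : B <> Q) (HEQ : E <> Q) (HQ'Q : Q' <> Q).

Definition fresh_extension : interp :=
  fun p t =>
    if Nat.eq_dec p B then t = tB - 1
    else if Nat.eq_dec p E then t = tE + 1
    else if Nat.eq_dec p Q' then t <= tE + 1 /\ forall u, t < u <= tE -> M Q u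
    else M p t.

Ltac unfold_fresh_extension :=
  unfold fresh_extension in *; repeat destruct Nat.eq_dec; subst; try congruence.

Lemma fresh_extension_other (p : prop) (t : Z) :
  p <> B -> p <> E -> p <> Q' -> fresh_extension p t = M p t.
Proof. intros. unfold_fresh_extension. Qed.

Lemma model_prog_fresh_extension (P : program) :
  ~ occ_prog B P -> ~ occ_prog E P -> ~ occ_prog Q' P ->
  model_prog M P -> model_prog fresh_extension P.
Proof.
  intros HoB HoE HoQ'. apply model_prog_ext. intros q Hq t.
  rewrite fresh_extension_other; [reflexivity|..]; intros ->; contradiction.
Qed.

Lemma model_facts_fresh_extension (D : dataset) :
  ~ occ_ds B D -> ~ occ_ds E D -> ~ occ_ds Q' D -> model_facts M (fs_of D) ->
  model_facts fresh_extension
    (fs_of (D ++ [mkFact B (punct (tB - 1)); mkFact E (punct (tE + 1))])).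
Proof.
  intros HdB HdE HdQ' HMD f Hf t Ht. unfold fs_of in Hf.
  rewrite in_app_iff in Hf. destruct Hf as [Hf|[<-|[<-|[]]]].
  - rewrite fresh_extension_other; [exact (HMD f Hf t Ht)|..];
      intros Hp; [apply HdB|apply HdE|apply HdQ']; now exists f.
  - unfold in_interval in Ht; simpl in *. unfold_fresh_extension. lia.
  - unfold in_interval in Ht; simpl in *. unfold_fresh_extension. lia.
Qed.

Lemma model_fresh_extension_PiQ (P : program) (t0 : Z) :
  ~ occ_prog B P -> ~ occ_prog E P -> ~ occ_prog Q' P ->
  model_prog M P -> tB <= t0 <= tE -> ~ M Q t0 ->
  model_prog fresh_extension (PiQ P Q B E Q').
Proof.
  intros HoB HoE HoQ' HMP Ht0 HQt0. unfold PiQ. apply model_prog_app.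
  split; [now apply model_prog_fresh_extension|].
  intros r [<-|[<-|[]]] t Hbody; simpl in *.
  - destruct (Hbody _ (or_introl eq_refl)) as (s & Hs & HEs & HQs); clear Hbody.
    unfold in_range in Hs; simpl in Hs. unfold_fresh_extension.
    split; [lia|]. intros u Hu. specialize (HQs u ltac:(lia)). unfold_fresh_extension.
  - specialize (Hbody _ (or_introl eq_refl)) as HBt.
    specialize (Hbody _ (or_intror (or_introl eq_refl))) as HQ't.
    simpl in HBt, HQ't. unfold_fresh_extension.
    apply HQt0, HQ't. lia.
Qed.

End FreshExtension.

Theorem mainTheorem6 (P : program) (D : dataset) (Q : prop) (tB tE : Z)
    (B E Q' : prop) :
  is_dataset D -> normal_form D -> tB <= tE ->
  B <> E -> B <> Q' -> E <> Q' -> B <> Q -> E <> Q -> Q' <> Q ->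
  ~ occ_prog B P -> ~ occ_prog E P -> ~ occ_prog Q' P ->
  ~ occ_ds B D -> ~ occ_ds E D -> ~ occ_ds Q' D ->
  (~ s_int_entails P D (mkFact Q (closed_int tB tE)) <->
   exists D' : dataset, subset_ds D' D /\
     consistent (PiQ P Q B E Q')
       (fs_of (D' ++ [mkFact B (punct (tB - 1)); mkFact E (punct (tE + 1))])) /\
     forall phi, In phi D -> ~ In phi D' ->
       exists R, s_repair P D R /\ ~ In phi R).
Proof.
  intros _ Hnf Hle HBE HBQ' HEQ' HBQ HEQ HQ'Q HoB HoE HoQ' HdB HdE HdQ'. split.
  - intros Hne.
    destruct (not_entails_countermodel _ _ _ Hne) as (M & HMP & HMI & t0 & Ht0 & HQt0).
    unfold in_interval in Ht0; simpl in Ht0, HQt0.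
    destruct (filter_prop_exists _ (fun f => forall R, s_repair P D R -> In f R) D)
      as [D' HD'].
    assert (HD'D : subset_ds D' D) by (intros f Hf; now apply HD' in Hf).
    exists D'. repeat split; [exact HD'D| |].
    + exists (fresh_extension M Q B E Q' tB tE). split.
      * apply model_fresh_extension_PiQ with (t0 := t0); auto.
      * assert (Hfresh : forall p, ~ occ_ds p D -> ~ occ_ds p D')
          by (intros p Hp Hocc; exact (Hp (occ_ds_subset p D' D HD'D Hocc))).
        apply model_facts_fresh_extension; auto.
        intros f Hf. apply (sat_fact_in_all_repairs P D); [exact HMI|now apply HD'].
    + intros phi Hphi Hn.
      apply NNPP. intros Hnone. apply Hn, HD'. split; [exact Hphi|].
      intros R HR. apply NNPP. intros HphiR. apply Hnone. now exists R.
  - intros (D' & _ & (M & HMPQ & HMF) & Hmiss) Hent.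
    assert (HMP : model_prog M P) by now apply model_prog_app in HMPQ.
    assert (HMD' : model_facts M (fs_of D'))
      by (intros f Hf; apply HMF; apply in_or_app; now left).
    apply (PiQ_refutes_Q P M Q B E Q' tB tE Hle HMPQ).
    + apply (HMF (mkFact B (punct (tB - 1)))); [apply in_or_app; simpl; tauto|].
      unfold in_interval; simpl; lia.
    + apply (HMF (mkFact E (punct (tE + 1)))); [apply in_or_app; simpl; tauto|].
      unfold in_interval; simpl; lia.
    + intros t Ht. apply (Hent M HMP); [|unfold in_interval; simpl; lia].
      apply (model_s_int_set P D D'); auto.
      apply s_repair_exists. exists M. split; [exact HMP|]. intros f [].
Qed.
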